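(* Let $F$ be a nonempty subset of $\mathbb{R}^2$ and $u \in \mathbb{S}$. If $F - F = \{x - y : x,y \in F\}$ is disjoint from some double wedge around $u$, then the restriction of $T_u$ to $F$ is a quasi-isometric embedding $F \to \mathbb{R}$.
   Context: $\mathbb{S}$ is the unit circle in $\mathbb{R}^2$. For $u = (u_1,u_2) \in \mathbb{S}$, $T_u : \mathbb{R}^2 \to \mathbb{R}$ is the orthogonal projection parallel to $u$, i.e. $T_u(x) = \langle x, (u_2,-u_1)\rangle$, so $T_u(x)=T_u(y)$ iff $x - y \in \mathbb{R}u$. A double wedge around $u$ is a set $C^u_{s,\varepsilon} := \{tv : t \in \mathbb{R}, |t| > s, v \in \mathbb{S}, \|v-u\| < \varepsilon\}$ for some $s,\varepsilon > 0$. For $\lambda,\delta>0$, a map $f : X \to Y$ between subsets of Euclidean spaces is a $(\lambda,\delta)$-quasi-isometry if $\frac{1}{\lambda}\|x-x'\| - \delta \leq \|f(x)-f(x')\| \leq \lambda\|x-x'\| + \delta$ for all $x,x' \in X$ and every $y \in Y$ is within distance $<\delta$ of some $f(x)$; a quasi-isometry is a $(\lambda,\delta)$-quasi-isometry for some $\lambda,\delta>0$. A map $g : X \to \mathbb{R}$ is a quasi-isometric embedding if $g$ is a quasi-isometry $X \to g(X)$. *)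

From Stdlib Require Import Reals.
Open Scope R_scope.

Definition vsub (x y : R * R) : R * R := (fst x - fst y, snd x - snd y).
Definition vscale (t : R) (v : R * R) : R * R := (t * fst v, t * snd v).

Definition norm2 (x : R * R) : R := sqrt (fst x ^ 2 + snd x ^ 2).

Definition in_S (u : R * R) : Prop := norm2 u = 1.

Definition T (u : R * R) (x : R * R) : R := fst x * snd u + snd x * (- fst u).

Definition double_wedge (u : R * R) (s eps : R) (z : R * R) : Prop :=
  exists (t : R) (v : R * R),
    Rabs t > s /\ in_S v /\ norm2 (vsub v u) < eps /\ z = vscale t v.

Definition diff_set (F : R * R -> Prop) (z : R * R) : Prop :=
  exists x y, F x /\ F y /\ z = vsub x y.

Definition quasi_isometry_R2_R (X : R * R -> Prop) (Y : R -> Prop)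
    (f : R * R -> R) (lam del : R) : Prop :=
  (forall x x', X x -> X x' ->
      / lam * norm2 (vsub x x') - del <= Rabs (f x - f x') /\
      Rabs (f x - f x') <= lam * norm2 (vsub x x') + del) /\
  (forall y, Y y -> exists x, X x /\ Rabs (y - f x) < del).

Definition image (X : R * R -> Prop) (g : R * R -> R) (y : R) : Prop :=
  exists x, X x /\ y = g x.

Definition qi_embedding (X : R * R -> Prop) (g : R * R -> R) : Prop :=
  exists lam del, lam > 0 /\ del > 0 /\ quasi_isometry_R2_R X (image X g) g lam del.

(* For z in F - F outside the ball of radius s, neither z / |z| nor - z / |z|
   lies within eps of u.  For a unit vector w this pins the inner product
   <w, u> away from 1 and -1, and since <w, u>^2 + T_u(w)^2 = 1 it bounds
   |T_u(w)| from below by min(eps, 1) / 2.  Scaling back, T_u is expanding up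
   to a multiplicative constant and the additive error s on F - F, while being
   1-Lipschitz everywhere; the coarse surjectivity onto its own image is
   trivial. *)

From Stdlib Require Import Reals Lra Psatz.
Open Scope R_scope.

Definition dot (x y : R * R) : R := fst x * fst y + snd x * snd y.

Lemma norm2_ge0 (z : R * R) : 0 <= norm2 z.
Proof. apply sqrt_pos. Qed.

Lemma norm2_sqr (z : R * R) : norm2 z ^ 2 = fst z ^ 2 + snd z ^ 2.
Proof. apply pow2_sqrt. nra. Qed.

Lemma norm2_vscale (t : R) (z : R * R) : norm2 (vscale t z) = Rabs t * norm2 z.
Proof.
  unfold norm2, vscale; cbn [fst snd].
  replace ((t * fst z) ^ 2 + (t * snd z) ^ 2) with (t ^ 2 * (fst z ^ 2 + snd z ^ 2))
    by ring.
  rewrite sqrt_mult_alt by nra.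
  rewrite <- pow2_abs, sqrt_pow2 by apply Rabs_pos.
  reflexivity.
Qed.

Lemma in_S_sqr (u : R * R) : in_S u -> fst u ^ 2 + snd u ^ 2 = 1.
Proof. intros Hu. rewrite <- norm2_sqr, Hu. ring. Qed.

Lemma in_S_vscale_opp (w : R * R) : in_S w -> in_S (vscale (-1) w).
Proof. unfold in_S. intros Hw. rewrite norm2_vscale, Hw, Rabs_left by lra. lra. Qed.

Lemma T_vsub (u x y : R * R) : T u (vsub x y) = T u x - T u y.
Proof. unfold T, vsub; simpl. ring. Qed.

Lemma T_vscale (u : R * R) (t : R) (z : R * R) : T u (vscale t z) = t * T u z.
Proof. unfold T, vscale; simpl. ring. Qed.

Lemma dot_sqr_add_T_sqr (u z : R * R) :
  in_S u -> dot z u ^ 2 + T u z ^ 2 = norm2 z ^ 2.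
Proof.
  intros Hu. rewrite norm2_sqr.
  replace (fst z ^ 2 + snd z ^ 2)
    with ((fst z ^ 2 + snd z ^ 2) * (fst u ^ 2 + snd u ^ 2)) by (rewrite (in_S_sqr u Hu); ring).
  unfold dot, T. ring.
Qed.

Lemma Rabs_T_le_norm2 (u z : R * R) : in_S u -> Rabs (T u z) <= norm2 z.
Proof.
  intros Hu.
  pose proof (dot_sqr_add_T_sqr u z Hu) as Hsum.
  pose proof (norm2_ge0 z).
  apply Rabs_le. split; nra.
Qed.

Lemma norm2_vsub_unit_sqr (w u : R * R) :
  in_S w -> in_S u -> norm2 (vsub w u) ^ 2 = 2 - 2 * dot w u.
Proof.
  intros Hw Hu. apply in_S_sqr in Hw, Hu.
  rewrite norm2_sqr. unfold vsub, dot; simpl. nra.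
Qed.

Lemma Rabs_T_unit_ge (u w : R * R) (e : R) :
  in_S u -> in_S w -> 0 < e <= 1 ->
  e <= norm2 (vsub w u) -> e <= norm2 (vsub (vscale (-1) w) u) ->
  e / 2 <= Rabs (T u w).
Proof.
  intros Hu Hw He Hfar Hfar_opp.
  pose proof (in_S_vscale_opp w Hw) as Hw_opp.
  assert (Hdot_opp : dot (vscale (-1) w) u = - dot w u) by (unfold dot, vscale; simpl; ring).
  assert (Hdot_le : e ^ 2 <= 2 - 2 * dot w u).
  { rewrite <- norm2_vsub_unit_sqr by assumption. nra. }
  assert (Hdot_ge : e ^ 2 <= 2 + 2 * dot w u).
  { replace (2 + 2 * dot w u) with (2 - 2 * dot (vscale (-1) w) u) by (rewrite Hdot_opp; ring).
    rewrite <- norm2_vsub_unit_sqr by assumption. nra. }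
  assert (Hdot_sqr : dot w u ^ 2 <= (1 - e ^ 2 / 2) ^ 2) by nra.
  pose proof (dot_sqr_add_T_sqr u w Hu) as Hsum.
  rewrite Hw in Hsum.
  assert (HT_sqr : (e / 2) ^ 2 <= Rabs (T u w) ^ 2) by (rewrite pow2_abs; nra).
  pose proof (Rabs_pos (T u w)). nra.
Qed.

Lemma outside_double_wedge_far (u v : R * R) (s eps t : R) :
  ~ double_wedge u s eps (vscale t v) -> Rabs t > s -> in_S v ->
  eps <= norm2 (vsub v u).
Proof.
  intros Hout Ht Hv. apply Rnot_lt_le. intros Hnear.
  apply Hout. exists t, v. auto.
Qed.

Lemma Rabs_T_ge_outside_double_wedge (u z : R * R) (s eps : R) :
  in_S u -> 0 <= s -> 0 < eps -> s < norm2 z -> ~ double_wedge u s eps z ->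
  Rmin eps 1 / 2 * norm2 z <= Rabs (T u z).
Proof.
  intros Hu Hs Heps Hz Hout.
  set (t := norm2 z) in *.
  assert (Ht : 0 < t) by lra.
  set (w := vscale (/ t) z).
  assert (Hw : in_S w).
  { unfold in_S, w. rewrite norm2_vscale, Rabs_inv, Rabs_pos_eq by lra.
    fold t. field. lra. }
  assert (Hz_w : z = vscale t w).
  { unfold w, vscale; destruct z; simpl. f_equal; field; lra. }
  assert (Hz_opp : z = vscale (- t) (vscale (-1) w)).
  { rewrite Hz_w at 1. unfold vscale; simpl. f_equal; ring. }
  assert (Hmin : 0 < Rmin eps 1 <= 1) by (split; [apply Rmin_glb_lt | apply Rmin_r]; lra).
  assert (Hfar : Rmin eps 1 <= norm2 (vsub w u)).
  { eapply Rle_trans; [apply Rmin_l|].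
    apply (outside_double_wedge_far u w s eps t); [rewrite <- Hz_w | rewrite Rabs_pos_eq |]; auto; lra. }
  assert (Hfar_opp : Rmin eps 1 <= norm2 (vsub (vscale (-1) w) u)).
  { eapply Rle_trans; [apply Rmin_l|].
    apply (outside_double_wedge_far u _ s eps (- t));
      [rewrite <- Hz_opp | rewrite Rabs_Ropp, Rabs_pos_eq | apply in_S_vscale_opp];
      auto; lra. }
  pose proof (Rabs_T_unit_ge u w _ Hu Hw Hmin Hfar Hfar_opp).
  rewrite Hz_w, T_vscale, Rabs_mult, (Rabs_pos_eq t) by lra.
  nra.
Qed.

Lemma qi_embedding_of_bounds (X : R * R -> Prop) (g : R * R -> R) (c d : R) :
  0 < c <= 1 -> 0 <= d ->
  (forall x x', X x -> X x' ->
     c * norm2 (vsub x x') - d <= Rabs (g x - g x') <= norm2 (vsub x x')) ->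
  qi_embedding X g.
Proof.
  intros Hc Hd Hbounds.
  exists (/ c), (d + 1).
  assert (Hlam : 1 <= / c).
  { rewrite <- Rinv_1. apply Rinv_le_contravar; lra. }
  split; [lra|]. split; [lra|]. split.
  - intros x x' Hx Hx'.
    destruct (Hbounds x x' Hx Hx') as [Hlow Hup].
    pose proof (norm2_ge0 (vsub x x')).
    rewrite Rinv_inv. split; nra.
  - intros y [x [Hx ->]]. exists x. split; [assumption|].
    rewrite Rminus_diag, Rabs_R0. lra.
Qed.

Theorem lemma3p1 (F : R * R -> Prop) (u : R * R) :
  (exists x, F x) ->
  in_S u ->
  (exists s eps, s > 0 /\ eps > 0 /\
     forall z, ~ (diff_set F z /\ double_wedge u s eps z)) ->
  qi_embedding F (T u).
Proof.
  intros _ Hu [s [eps [Hs [Heps Hdisj]]]].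
  assert (Hmin : 0 < Rmin eps 1 <= 1) by (split; [apply Rmin_glb_lt | apply Rmin_r]; lra).
  apply (qi_embedding_of_bounds F (T u) (Rmin eps 1 / 2) s); [lra | lra |].
  intros x x' Hx Hx'.
  rewrite <- T_vsub.
  set (z := vsub x x').
  split; [|apply Rabs_T_le_norm2; assumption].
  destruct (Rle_or_lt (norm2 z) s) as [Hnear | Hfar].
  - pose proof (Rabs_pos (T u z)). nra.
  - assert (Hout : ~ double_wedge u s eps z).
    { intros Hin. apply (Hdisj z). split; [exists x, x'; auto | exact Hin]. }
    pose proof (Rabs_T_ge_outside_double_wedge u z s eps Hu ltac:(lra) Heps Hfar Hout).
    lra.
Qed.
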